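(* Let $m\ge3$, $X=\{0,1,\dots,m-1\}$, $a_m=(0\,1\,\cdots\,m{-}1)$ and $a_2=(0\,1)$. Let $G=\langle A\cup B\rangle$ be a CS group with rooted group $A=\mathrm{Sym}(X)$ acting naturally, and suppose $B$ has a generating set $S$ such that, among the family of sections $(b|_x)_{b\in S,\,x\in\dot X}$, exactly one entry equals $a_m$, exactly two entries equal $a_2$, and all other entries are trivial. Then $G$ is not periodic.
   Context: $X^*$ is the free monoid on $X$ viewed as a rooted tree with distinguished letter $0$, $\dot X=X\setminus\{0\}$; $\mathrm{Aut}(X^* )$ acts on the right; sections are defined by $(u\star v).g=u.g\star v.(g|_u)$; permutations of $X$ are rooted automorphisms; $\mathrm{St}(1)$ is the first layer stabiliser. A CS group is $\langle A\cup B\rangle$ with $A\le\mathrm{Sym}(X)$ transitive and $B\le\mathrm{St}(1)$ such that $b|_0=b$ for all $b\in B$ and the elements $b|_x$ ($b\in B$, $x\in\dot X$) lie in $A$ and generate $A$. Periodic: every element has finite order. *)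

From mathcomp Require Import all_boot all_fingroup.
Set Implicit Arguments. Unset Strict Implicit. Unset Printing Implicit Defensive.

(* The free monoid X^* over an alphabet X = 'I_k, words are [:: x1; ...; xn]
   read from the root (x1 is the first-level letter).  Tree maps act on the
   right: u.g is written  g u , and the product g*h (first g then h) is h \o g. *)

Section Tree.
Variable k : nat.
Local Notation W := (seq 'I_k).

Definition is_aut (g : W -> W) : Prop :=
  [/\ bijective g, g [::] = [::] &
      forall u x, exists y, g (rcons u x) = rcons (g u) y].

(* section g|_u, defined by (u ++ v).g = u.g ++ v.(g|_u) *)
Definition section (g : W -> W) (u : W) : W -> W :=
  fun v => drop (size u) (g (u ++ v)).

Definition rooted (s : {perm 'I_k}) : W -> W :=
  fun w => match w with [::] => [::] | x :: w' => s x :: w' end.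

Inductive gen (T : (W -> W) -> Prop) : (W -> W) -> Prop :=
| gen1 : gen T (fun u => u)
| genM : forall g s, gen T g -> T s -> gen T (s \o g)
| genV : forall g s t, gen T g -> T s -> cancel s t -> cancel t s ->
    gen T (t \o g).

Definition ingen (T : (W -> W) -> Prop) (f : W -> W) : Prop :=
  exists g, gen T g /\ f =1 g.

Definition in_Sym (f : W -> W) : Prop := exists s : {perm 'I_k}, f =1 rooted s.

Definition in_St1 (f : W -> W) : Prop := forall x : 'I_k, f [:: x] = [:: x].

Definition periodic (G : (W -> W) -> Prop) : Prop :=
  forall g, G g -> exists n, 0 < n /\ forall u, iter n g u = u.
End Tree.

(* a_m = (0 1 ... m-1), a_2 = (0 1), for m = n.+3 *)
Definition a_m (n : nat) : {perm 'I_n.+3} := perm (@ordS_inj n.+3).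
Definition a_2 (n : nat) : {perm 'I_n.+3} := tperm ord0 (inord 1).

From mathcomp Require Import all_boot all_fingroup zify.
From Stdlib Require Import Classical.
Set Implicit Arguments. Unset Strict Implicit. Unset Printing Implicit Defensive.

(* Choose b in B (a
   generator or a product of two) and a rooted permutation tau such that the
   tau-orbit of 0 is a cycle 0, y_1, ..., y_(K-1) with K >= 2 and the product of
   the sections of b at y_1, ..., y_(K-1) is tau itself.  The element g that
   applies b and then tau satisfies: g^K fixes the vertex 0 and has section g
   there.  So g^N = 1 forces K | N and g^(N/K) = 1, and by descent g has
   infinite order.  Depending on where the sections a_m and a_2 sit, tau is a_m
   (orbit 1, ..., m-1), a_2 (orbit 1), or a_2 a_m a_2 (orbit 2, ..., m-1, 1). *)

Section TreeAutomorphism.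
Variable k : nat.
Local Notation W := (seq 'I_k).

Lemma is_aut_cons (b : W -> W) : is_aut b ->
  forall x v, exists v', b (x :: v) = b [:: x] ++ v'.
Proof.
case=> _ _ b_rcons x; elim/last_ind=> [|v y [v' IH]]; first by exists [::]; rewrite cats0.
have [z ->] := b_rcons (x :: v) y.
by exists (rcons v' z); rewrite IH rcons_cat.
Qed.

Lemma St1_cons_section (b : W -> W) : is_aut b -> in_St1 b ->
  forall x v, b (x :: v) = x :: section b [:: x] v.
Proof.
move=> b_aut b_st x v; have [v' b_xv] := is_aut_cons b_aut x v.
by rewrite /section b_xv b_st /= drop0.
Qed.

Lemma rooted1 (v : W) : rooted 1 v = v.
Proof. by case: v => //= x w; rewrite perm1. Qed.

Lemma rootedM (p q : {perm 'I_k}) (v : W) :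
  rooted p (rooted q v) = rooted (q * p) v.
Proof. by case: v => //= x w; rewrite permM. Qed.

End TreeAutomorphism.

Section SelfReplicating.
Variable k : nat.
Local Notation I := 'I_k.+1.
Local Notation W := (seq I).

Definition cs_sections (b : W -> W) (s : I -> {perm I}) : Prop :=
  (forall w, b (ord0 :: w) = ord0 :: b w) /\
  (forall x v, x != ord0 -> b (x :: v) = x :: rooted (s x) v).

Lemma cs_sections_comp bA bB sA sB :
  cs_sections bA sA -> cs_sections bB sB ->
  cs_sections (bA \o bB) (fun x => sB x * sA x)%g.
Proof.
move=> [A0 Ax] [B0 Bx]; split=> [w|x v nx] /=; first by rewrite B0 A0.
by rewrite Bx // Ax // rootedM.
Qed.

Lemma cs_sections_eq b s s' : cs_sections b s ->
  (forall x, x != ord0 -> s x = s' x) -> cs_sections b s'.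
Proof. by move=> [b0 bx] ss'; split=> // x v nx; rewrite bx // ss'. Qed.

Variables (b : W -> W) (s : I -> {perm I}) (tau : {perm I}) (K : nat).
Hypothesis bs : cs_sections b s.
Hypothesis K_gt1 : 1 < K.
Hypothesis orbit_nz : forall j, 0 < j < K -> iter j tau ord0 != ord0.
Hypothesis orbit_ret : iter K tau ord0 = ord0.
Hypothesis orbit_prod : (\prod_(1 <= j < K) s (iter j tau ord0))%g = tau.

Let g := rooted tau \o b.

Lemma iter_cons_head j x v : exists v', iter j g (x :: v) = iter j tau x :: v'.
Proof.
elim: j => [|j [v' IH]]; first by exists v.
rewrite !iterS IH /g /=; case: bs => b0 bx.
case: (eqVneq (iter j tau x) ord0) => [->|nz]; first by rewrite b0; eexists.
by rewrite bx //; eexists.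
Qed.

Lemma iter_orbit_ord0 j w : j < K ->
  iter j.+1 g (ord0 :: w) =
  iter j.+1 tau ord0 :: rooted (\prod_(1 <= i < j.+1) s (iter i tau ord0))%g (b w).
Proof.
case: bs => b0 bx; elim: j => [|j IH] jK.
  by rewrite big_geq // rooted1 /= /g /= b0.
have nz : iter j.+1 tau ord0 != ord0 by apply: orbit_nz.
by rewrite iterS IH 1?ltnW // /g /= bx //= rootedM -big_nat_recr.
Qed.

Lemma iter_period_ord0 q w : iter (q * K) g (ord0 :: w) = ord0 :: iter q g w.
Proof.
have gK u : iter K g (ord0 :: u) = ord0 :: g u.
  have K_pos : 0 < K by apply: ltnW.
  by rewrite -(prednK K_pos) iter_orbit_ord0 ?prednK ?ltn_predL // orbit_prod orbit_ret.
by elim: q w => [|q IH] w //; rewrite mulSn iterD IH gK.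
Qed.

Lemma orbit_ord0_dvdn N : iter N tau ord0 = ord0 -> K %| N.
Proof.
have iter_qK q : iter (q * K) tau ord0 = ord0.
  by elim: q => [|q IH] //; rewrite mulSn iterD IH orbit_ret.
rewrite {1}(divn_eq N K) addnC iterD iter_qK /dvdn => ret.
have [//|r_pos] := posnP (N %% K).
have r_lt : N %% K < K by rewrite ltn_pmod // ltnW.
by have := orbit_nz (j := N %% K); rewrite r_pos r_lt ret eqxx => /(_ isT).
Qed.

Lemma iter_rooted_comp_not_id N : 0 < N -> ~ (forall u, iter N g u = u).
Proof.
elim/ltn_ind: N => N IH N_pos gN.
have ret : iter N tau ord0 = ord0.
  by have [v' E] := iter_cons_head N ord0 [::]; move: (gN [:: ord0]); rewrite E => -[].
have /dvdnP [q N_eq] := orbit_ord0_dvdn ret.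
have q_pos : 0 < q by move: N_pos; rewrite N_eq muln_gt0 => /andP [].
apply: (IH q _ q_pos) => [|u]; first by rewrite N_eq ltn_Pmulr.
by move: (gN (ord0 :: u)); rewrite N_eq iter_period_ord0 => -[].
Qed.

End SelfReplicating.

Lemma eqn_ord m (x y : 'I_m) : (x == y :> nat) = (x == y).
Proof. by []. Qed.

Section RootedPermutations.
Variable n : nat.
Local Notation I := 'I_n.+3.
Local Notation am := (a_m n).
Local Notation a2 := (a_2 n).

Lemma inord_neq0 j : 0 < j < n.+3 -> (inord j : I) != ord0.
Proof. by case/andP=> j_pos j_lt; rewrite -val_eqE /= inordK // -lt0n. Qed.

Lemma am_inord j : j < n.+2 -> am (inord j) = inord j.+1.
Proof. by move=> j_lt; apply: val_inj; rewrite /a_m permE /= !inordK ?modn_small //; lia. Qed.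

Lemma am_ord0 : am ord0 = inord 1.
Proof. by apply: val_inj; rewrite /a_m permE /= inordK. Qed.

Lemma am_last : am (inord n.+2) = ord0.
Proof. by apply: val_inj; rewrite /a_m permE /= inordK ?modnn. Qed.

Lemma a2_ord0 : a2 ord0 = inord 1.
Proof. exact: tpermL. Qed.

Lemma a2_1 : a2 (inord 1) = ord0.
Proof. exact: tpermR. Qed.

Lemma a2_inord j : 1 < j < n.+3 -> a2 (inord j) = inord j.
Proof.
case/andP=> j_gt1 j_lt; apply: tpermD; rewrite -val_eqE /= !inordK //; lia.
Qed.

Lemma mul_a2_a2 : (a2 * a2 = 1)%g.
Proof. exact: tperm2. Qed.

Lemma expg_a2_even k : ~~ odd k -> (a2 ^+ k = 1)%g.
Proof.
move=> k_even; rewrite -(odd_double_half k) (negbTE k_even) add0n -mul2n expgM.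
by rewrite expgS expg1 mul_a2_a2 expg1n.
Qed.

Lemma expg_a2_odd k : odd k -> (a2 ^+ k = a2)%g.
Proof.
move=> k_odd; rewrite -(odd_double_half k) k_odd expgD expg1 -mul2n expgM.
by rewrite expgS expg1 mul_a2_a2 expg1n mulg1.
Qed.

Lemma iter_am_ord0 j : j < n.+3 -> iter j am ord0 = inord j.
Proof.
elim: j => [|j IH] j_lt; first by apply: val_inj; rewrite /= inordK.
by rewrite iterS IH ?am_inord // ltnW.
Qed.

Lemma a2_am_a2E x : (a2 * am * a2)%g x = a2 (am (a2 x)).
Proof. by rewrite !permM. Qed.

Lemma iter_a2_am_a2_ord0 j : j <= n -> iter j.+1 (a2 * am * a2)%g ord0 = inord j.+2.
Proof.
elim: j => [|j IH] j_le; first by rewrite iterS a2_am_a2E a2_ord0 am_inord // a2_inord.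
have j2 : 1 < j.+2 < n.+3 by lia.
have j3 : 1 < j.+3 < n.+3 by lia.
by rewrite iterS IH 1?ltnW // a2_am_a2E (a2_inord j2) am_inord ?(a2_inord j3) //; lia.
Qed.

Lemma iter_a2_am_a2_last : iter n.+2 (a2 * am * a2)%g ord0 = inord 1.
Proof.
have n2 : 1 < n.+2 < n.+3 by lia.
by rewrite iterS iter_a2_am_a2_ord0 // a2_am_a2E (a2_inord n2) am_last a2_ord0.
Qed.

Lemma rooted_am_neq_a2 : ~ rooted am =1 rooted a2.
Proof.
move=> /(_ [:: inord 1]) [] /(congr1 val).
by rewrite am_inord // a2_1 /= inordK.
Qed.

End RootedPermutations.

Lemma sum_nat_pred1 (i m n : nat) : \sum_(m <= j < n) (j == i) = (m <= i < n).
Proof.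
rewrite (eq_bigr (fun j => if j == i then 1 else 0)) => [|j _]; last by case: eqP.
by rewrite -big_mkcond big_nat1_eq; case: ifP.
Qed.

Section CSGroup.
Variable n : nat.
Local Notation I := 'I_n.+3.
Local Notation W := (seq I).
Local Notation am := (a_m n).
Local Notation a2 := (a_2 n).
Variable S : (W -> W) -> Prop.
Local Notation G := (ingen (fun f => in_Sym f \/ ingen S f)).

Lemma mem_ingen b : S b -> ingen S b.
Proof. by move=> Sb; exists (b \o id); split=> //; apply: genM (gen1 _) Sb. Qed.

Lemma mem_ingen_comp bA bB : S bA -> S bB -> ingen S (bA \o bB).
Proof.
by move=> SA SB; exists (bA \o (bB \o id)); split=> //; apply: genM (genM (gen1 _) SB) SA.
Qed.

Lemma mem_ingen_rooted_comp tau b : ingen S b -> G (rooted tau \o b).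
Proof.
move=> Bb; exists (rooted tau \o (b \o id)); split=> //.
by apply: genM (genM (gen1 _) (or_intror Bb)) _; left; exists tau.
Qed.

Lemma not_periodic_of_orbit b s (tau : {perm I}) K :
  ingen S b -> cs_sections b s -> 1 < K ->
  (forall j, 0 < j < K -> iter j tau ord0 != ord0) -> iter K tau ord0 = ord0 ->
  (\prod_(1 <= j < K) s (iter j tau ord0))%g = tau -> ~ periodic G.
Proof.
move=> Bb bs K_gt1 nz ret prod G_per.
have [N [N_pos gN]] := G_per _ (mem_ingen_rooted_comp tau Bb).
exact: (iter_rooted_comp_not_id bs K_gt1 nz ret prod N_pos gN).
Qed.

Section Orbits.
Variables (b : W -> W) (s : I -> {perm I}).
Hypotheses (Bb : ingen S b) (bs : cs_sections b s).

Lemma not_periodic_orbit_am : (\prod_(1 <= j < n.+3) s (inord j))%g = am -> ~ periodic G.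
Proof.
move=> prod; apply: (not_periodic_of_orbit Bb bs (tau := am) (K := n.+3)) => //.
- by move=> j /andP [j_pos j_lt]; rewrite iter_am_ord0 // inord_neq0 ?j_pos.
- by rewrite iterS iter_am_ord0 // am_last.
- rewrite -[in RHS]prod; apply: eq_big_nat => j /andP [_ j_lt].
  by rewrite iter_am_ord0.
Qed.

Lemma not_periodic_orbit_a2 : s (inord 1) = a2 -> ~ periodic G.
Proof.
move=> s1; apply: (not_periodic_of_orbit Bb bs (tau := a2) (K := 2)) => //.
- by case=> [|[|]] //= _; rewrite a2_ord0 inord_neq0.
- by rewrite /= a2_ord0 a2_1.
- by rewrite big_nat1 /= a2_ord0.
Qed.

Lemma not_periodic_orbit_a2_am_a2 :
  (\prod_(2 <= j < n.+3) s (inord j) * s (inord 1))%g = (a2 * am * a2)%g -> ~ periodic G.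
Proof.
move=> prod; apply: (not_periodic_of_orbit Bb bs (tau := a2 * am * a2) (K := n.+3)) => //.
- move=> [|j] // /andP [_ j_lt]; have [j_le|j_gt] := leqP j n.
    by rewrite iter_a2_am_a2_ord0 // inord_neq0.
  have -> : j = n.+1 by lia.
  by rewrite iter_a2_am_a2_last inord_neq0.
- by rewrite iterS iter_a2_am_a2_last a2_am_a2E a2_1 am_ord0 a2_1.
rewrite big_nat_recr // iter_a2_am_a2_last -[in RHS]prod; congr (_ * _)%g.
rewrite !big_add1 /=; apply: eq_big_nat => j /andP [_ j_lt].
by rewrite -iterS iter_a2_am_a2_ord0.
Qed.

Section Profile.
Variables (x1 : I) (p : {perm I}) (c : nat -> nat).
Hypotheses (s_x1 : s x1 = p)
           (s_pow : forall y : I, y != ord0 -> y != x1 -> s y = (a2 ^+ c y)%g).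

Lemma prod_sections_profile lo hi : 0 < lo <= x1 -> x1 < hi <= n.+3 ->
  (\prod_(lo <= j < hi) s (inord j))%g =
  (a2 ^+ (\sum_(lo <= j < x1) c j) * p * a2 ^+ (\sum_(x1.+1 <= j < hi) c j))%g.
Proof.
move=> /andP [lo_pos lo_le] /andP [x1_lt hi_le].
have s_inord j : lo <= j < hi -> j != x1 -> s (inord j) = (a2 ^+ c j)%g.
  move=> /andP [j_ge j_lt] j_ne; rewrite s_pow ?inordK ?inord_neq0 //; try lia.
  by rewrite -val_eqE /= inordK //; lia.
rewrite (@big_cat_nat _ _ _ x1) ?(ltnW x1_lt) // (@big_ltn _ _ _ x1) // inord_val s_x1.
rewrite -!prodgXr -[RHS]mulgA.
congr (_ * (_ * _))%g; apply: eq_big_nat => j j_in; rewrite s_inord //; lia.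
Qed.

Lemma not_periodic_profile_am : x1 != ord0 ->
  (a2 ^+ (\sum_(1 <= j < x1) c j) * p * a2 ^+ (\sum_(x1.+1 <= j < n.+3) c j))%g = am ->
  ~ periodic G.
Proof.
rewrite -lt0n => x1_pos prod; apply: not_periodic_orbit_am.
by rewrite prod_sections_profile ?x1_pos ?ltn_ord //=; apply: prod.
Qed.

Lemma not_periodic_profile_a2_am_a2 : 1 < x1 -> s (inord 1) = 1%g ->
  (a2 ^+ (\sum_(2 <= j < x1) c j) * p * a2 ^+ (\sum_(x1.+1 <= j < n.+3) c j))%g =
    (a2 * am * a2)%g ->
  ~ periodic G.
Proof.
move=> x1_gt1 s1 prod; apply: not_periodic_orbit_a2_am_a2.
by rewrite prod_sections_profile ?x1_gt1 ?ltn_ord //= s1 mulg1; apply: prod.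
Qed.

End Profile.
End Orbits.

Lemma not_periodic_single b x1 :
  ingen S b -> cs_sections b (fun y => if y == x1 then am else 1%g) -> x1 != ord0 ->
  ~ periodic G.
Proof.
move=> Bb bs x1_nz.
have s_pow y : y != ord0 -> y != x1 -> (if y == x1 then am else 1%g) = (a2 ^+ 0)%g.
  by move=> _ /negbTE ->.
apply: (not_periodic_profile_am Bb bs _ s_pow x1_nz); first by rewrite eqxx.
by rewrite !big1 // expg0 mul1g mulg1.
Qed.

(* If a_2 sits at vertex 1, the orbit of a_2 suffices; if both copies of a_2
   lie on the same side of x1 they cancel along the a_m-orbit; otherwise they
   flank a_m and the orbit of a_2 a_m a_2 applies. *)
Lemma not_periodic_triple b x1 x2 x3 :
  ingen S b ->
  cs_sections b (fun y => if y == x1 then am else if y == x2 then a2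
                          else if y == x3 then a2 else 1%g) ->
  x1 != ord0 -> x2 != ord0 -> x3 != ord0 -> x1 != x2 -> x1 != x3 -> x2 != x3 ->
  ~ periodic G.
Proof.
set s := fun y => _; move=> Bb bs x1_nz x2_nz x3_nz d12 d13 d23.
pose c (j : nat) := (j == x2) + (j == x3).
have s_x1 : s x1 = am by rewrite /s eqxx.
have s_x2 : s x2 = a2 by rewrite /s eq_sym (negbTE d12) eqxx.
have s_x3 : s x3 = a2 by rewrite /s eq_sym (negbTE d13) eq_sym (negbTE d23) eqxx.
have s_pow y : y != ord0 -> y != x1 -> s y = (a2 ^+ c y)%g.
  move=> _ /negbTE ne1; rewrite /s /c ne1 !eqn_ord.
  by case: (eqVneq y x2) => [->|_]; [rewrite (negbTE d23) | case: (eqVneq y x3)].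
have sum_c lo hi : \sum_(lo <= j < hi) c j = (lo <= x2 < hi) + (lo <= x3 < hi).
  by rewrite big_split !sum_nat_pred1.
have x1_lt := ltn_ord x1; have x2_lt := ltn_ord x2; have x3_lt := ltn_ord x3.
move: (x1_nz) (x2_nz) (x3_nz) (d12) (d13) (d23); rewrite -!val_eqE /=.
move=> x1_pos x2_pos x3_pos ne12 ne13 ne23.
have [x2_1|x2_ne1] := eqVneq (x2 : nat) 1.
  apply: (not_periodic_orbit_a2 Bb bs); rewrite -s_x2; congr s.
  by apply: val_inj; rewrite /= inordK.
have [x3_1|x3_ne1] := eqVneq (x3 : nat) 1.
  apply: (not_periodic_orbit_a2 Bb bs); rewrite -s_x3; congr s.
  by apply: val_inj; rewrite /= inordK.
have [same|opp] := eqVneq (x2 < x1) (x3 < x1).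
  apply: (not_periodic_profile_am Bb bs s_x1 s_pow x1_nz).
  by rewrite !expg_a2_even ?mul1g ?mulg1 // !sum_c; lia.
have s_1 : s (inord 1) = 1%g.
  have neq1 (y : I) : (y : nat) != 1 -> (inord 1 == y) = false.
    by move=> y_ne1; apply/negbTE; rewrite -val_eqE /= inordK // eq_sym.
  by rewrite /s !neq1 //; lia.
apply: (not_periodic_profile_a2_am_a2 Bb bs s_x1 s_pow _ s_1); first by lia.
by rewrite !expg_a2_odd // !sum_c; lia.
Qed.

(* For x3 = x1 the two generators are composed in the order that makes the
   copies of a_2 cancel around a_m. *)
Lemma not_periodic_pair bA bB x1 x2 x3 :
  S bA -> S bB ->
  cs_sections bA (fun y => if y == x1 then am else if y == x2 then a2 else 1%g) ->
  cs_sections bB (fun y => if y == x3 then a2 else 1%g) ->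
  x1 != ord0 -> x2 != ord0 -> x3 != ord0 -> x1 != x2 -> ~ periodic G.
Proof.
move=> SA SB As Bs x1_nz x2_nz x3_nz d12.
have ABs := cs_sections_comp As Bs; have BAs := cs_sections_comp Bs As.
have [e13|d13] := eqVneq x1 x3.
  subst x3; pose c (j : nat) := (j == x2) : nat.
  have x2_lt := ltn_ord x2.
  have [lt12|lt21] := ltnP x1 x2.
    apply: (not_periodic_profile_am (mem_ingen_comp SB SA) BAs (c := c) _ _ x1_nz) => /=.
    - by rewrite eqxx.
    - by move=> y _ /negbTE ->; rewrite mulg1 /c eqn_ord; case: (eqVneq y x2).
    have [-> ->] : \sum_(1 <= j < x1) c j = 0 /\ \sum_(x1.+1 <= j < n.+3) c j = 1.
      by rewrite /c !sum_nat_pred1; split; lia.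
    by rewrite expg0 expg1 mul1g -mulgA mul_a2_a2 mulg1.
  apply: (not_periodic_profile_am (mem_ingen_comp SA SB) ABs (c := c) _ _ x1_nz) => /=.
  - by rewrite eqxx.
  - by move=> y _ /negbTE ->; rewrite mul1g /c eqn_ord; case: (eqVneq y x2).
  have [-> ->] : \sum_(1 <= j < x1) c j = 1 /\ \sum_(x1.+1 <= j < n.+3) c j = 0.
    by move: d12 x2_nz; rewrite -!eqn_ord /c !sum_nat_pred1 /=; split; lia.
  by rewrite expg0 expg1 mulg1 mulgA mul_a2_a2 mul1g.
have [e23|d23] := eqVneq x2 x3.
  subst x3; apply: (not_periodic_single (mem_ingen_comp SA SB) _ x1_nz).
  apply: (cs_sections_eq ABs) => y _ /=.
  case: (eqVneq y x1) => [->|_]; first by rewrite (negbTE d12) mul1g.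
  by case: (eqVneq y x2) => _; rewrite ?mul_a2_a2 ?mulg1.
apply: (not_periodic_triple (mem_ingen_comp SA SB) _ x1_nz x2_nz x3_nz d12 d13 d23).
apply: (cs_sections_eq ABs) => y _ /=.
case: (eqVneq y x1) => [->|_]; first by rewrite (negbTE d13) mul1g.
case: (eqVneq y x2) => [->|_]; first by rewrite (negbTE d23) mul1g.
by case: (eqVneq y x3) => _; rewrite ?mulg1 ?mul1g.
Qed.

Section Generators.
Hypothesis S_aut : forall s, S s -> is_aut s.
Hypothesis B_St1 : forall b, ingen S b -> in_St1 b.
Hypothesis B_section0 : forall b, ingen S b -> section b [:: ord0] =1 b.
Variables (b1 b2 b3 : W -> W) (x1 x2 x3 : I).
Hypotheses (S1 : S b1) (S2 : S b2) (S3 : S b3).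
Hypotheses (x1_nz : x1 != ord0) (x2_nz : x2 != ord0) (x3_nz : x3 != ord0).
Hypothesis b2x2_neq_b3x3 : (b2, x2) <> (b3, x3).
Hypothesis section_am : forall b x, S b -> x != ord0 ->
  (section b [:: x] =1 rooted am <-> (b, x) = (b1, x1)).
Hypothesis section_a2 : forall b x, S b -> x != ord0 ->
  (section b [:: x] =1 rooted a2 <-> (b, x) = (b2, x2) \/ (b, x) = (b3, x3)).
Hypothesis section_1 : forall b x, S b -> x != ord0 ->
  ~ section b [:: x] =1 rooted am -> ~ section b [:: x] =1 rooted a2 ->
  section b [:: x] =1 (fun u => u).

Lemma cs_sections_generator b (e1 e2 e3 : bool) : S b ->
  reflect (b = b1) e1 -> reflect (b = b2) e2 -> reflect (b = b3) e3 ->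
  cs_sections b (fun y => if e1 && (y == x1) then am else if e2 && (y == x2) then a2
                          else if e3 && (y == x3) then a2 else 1%g).
Proof.
move=> Sb E1 E2 E3; have b_cons := St1_cons_section (S_aut Sb) (B_St1 (mem_ingen Sb)).
split=> [w|y v y_nz]; first by rewrite b_cons (B_section0 (mem_ingen Sb)).
rewrite b_cons; congr (_ :: _).
have pairE b' x' e : reflect (b = b') e -> ((b, y) = (b', x') <-> e && (y == x')).
  case=> [eb|ne]; last by split=> // -[/ne].
  by rewrite eb; split=> [[->]|/eqP ->]; rewrite ?eqxx.
case: ifP => [/(pairE _ _ _ E1)/(section_am Sb y_nz) sec|not_am]; first exact: sec v.
case: ifP => [/(pairE _ _ _ E2) e|not_a2_2].
  by apply: (proj2 (section_a2 Sb y_nz)); left.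
case: ifP => [/(pairE _ _ _ E3) e|not_a2_3].
  by apply: (proj2 (section_a2 Sb y_nz)); right.
rewrite rooted1; apply: section_1 => // [/(section_am Sb y_nz)|/(section_a2 Sb y_nz)].
  by move/(pairE _ _ _ E1); rewrite not_am.
by case=> [/(pairE _ _ _ E2)|/(pairE _ _ _ E3)]; rewrite ?not_a2_2 ?not_a2_3.
Qed.

Lemma generator_am_neq_a2 b x : S b -> x != ord0 -> (b, x) = (b1, x1) ->
  ~ ((b, x) = (b2, x2) \/ (b, x) = (b3, x3)).
Proof.
move=> Sb x_nz /(section_am Sb x_nz) sec_am /(section_a2 Sb x_nz) sec_a2.
by apply: (@rooted_am_neq_a2 n) => u; rewrite -sec_am -sec_a2.
Qed.

Lemma not_periodic_generators : ~ periodic G.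
Proof.
have d12 : b1 = b2 -> x1 != x2.
  move=> e; apply/eqP=> e'; apply: (generator_am_neq_a2 S1 x1_nz erefl).
  by left; rewrite e e'.
have d13 : b1 = b3 -> x1 != x3.
  move=> e; apply/eqP=> e'; apply: (generator_am_neq_a2 S1 x1_nz erefl).
  by right; rewrite e e'.
have [e12|n12] := classic (b1 = b2); have [e13|n13] := classic (b1 = b3).
- have d23 : x2 != x3 by apply/eqP=> e; apply: b2x2_neq_b3x3; rewrite -e12 -e13 e.
  apply: (not_periodic_triple (mem_ingen S1) _ x1_nz x2_nz x3_nz (d12 e12) (d13 e13) d23).
  by apply: (cs_sections_generator (e1 := true) (e2 := true) (e3 := true) S1);
    rewrite -?e12 -?e13; left.
- apply: (not_periodic_pair S1 S3 _ _ x1_nz x2_nz x3_nz (d12 e12)).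
    by apply: (cs_sections_generator (e1 := true) (e2 := true) (e3 := false) S1);
      [left | rewrite -e12; left | right].
  by apply: (cs_sections_generator (e1 := false) (e2 := false) (e3 := true) S3);
    [right => /esym | rewrite -e12; right => /esym | left].
- apply: (not_periodic_pair S1 S2 _ _ x1_nz x3_nz x2_nz (d13 e13)).
    by apply: (cs_sections_generator (e1 := true) (e2 := false) (e3 := true) S1);
      [left | right | rewrite -e13; left].
  by apply: (cs_sections_generator (e1 := false) (e2 := true) (e3 := false) S2);
    [right => /esym | left | rewrite -e13; right => /esym].
- apply: (not_periodic_single (mem_ingen S1) _ x1_nz).
  by apply: (cs_sections_generator (e1 := true) (e2 := false) (e3 := false) S1);
    [left | right | right].
Qed.

End Generators.
End CSGroup.

Theorem mainTheorem18 (n : nat)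
  (S : (seq 'I_n.+3 -> seq 'I_n.+3) -> Prop)
  (HSaut : forall s, S s -> is_aut s)
  (HBst : forall b, ingen S b -> in_St1 b)
  (HB0 : forall b, ingen S b -> section b [:: ord0] =1 b)
  (HBx : forall b x, ingen S b -> x != ord0 -> in_Sym (section b [:: x]))
  (HBgen : forall f, in_Sym f ->
     ingen (fun h => exists b x, [/\ ingen S b, x != ord0 & h =1 section b [:: x]]) f)
  (Ham : exists b1 x1, [/\ S b1, x1 != ord0 &
     forall b x, S b -> x != ord0 ->
       (section b [:: x] =1 rooted (a_m n) <-> (b, x) = (b1, x1))])
  (Ha2 : exists b2 x2 b3 x3, [/\ S b2 /\ x2 != ord0, S b3 /\ x3 != ord0,
     (b2, x2) <> (b3, x3) &
     forall b x, S b -> x != ord0 ->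
       (section b [:: x] =1 rooted (a_2 n) <-> ((b, x) = (b2, x2) \/ (b, x) = (b3, x3)))])
  (Htriv : forall b x, S b -> x != ord0 ->
     ~ (section b [:: x] =1 rooted (a_m n)) ->
     ~ (section b [:: x] =1 rooted (a_2 n)) ->
     section b [:: x] =1 (fun u => u)) :
  ~ periodic (ingen (fun f => in_Sym f \/ ingen S f)).
Proof.
case: Ham => b1 [x1 [S1 x1_nz section_am]].
case: Ha2 => b2 [x2 [b3 [x3 [[S2 x2_nz] [S3 x3_nz] neq23 section_a2]]]].
exact: (not_periodic_generators HSaut HBst HB0 S1 S2 S3 x1_nz x2_nz x3_nz neq23
          section_am section_a2 Htriv).
Qed.
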